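(* For every algebraic type $\tau$, $\mathsf{FiCA}_\tau=\mathbb{I}\,\mathsf{BLK}_\tau$: a clone $\tau$-algebra is finite dimensional if and only if it is isomorphic to a block $\tau$-algebra.
   Context: Let $\omega=\{1,2,\dots\}$. A clone $\tau$-algebra is an algebra $\mathbf C=(C,\sigma^{\mathbf C}\ (\sigma\in\tau),q_n^{\mathbf C}\ (n\ge0),\mathsf e_i^{\mathbf C}\ (i\ge1))$ with $\mathsf e_i$ nullary and $q_n$ of arity $n+1$ satisfying: (C1) $q_n(\mathsf e_i,x_1,\dots,x_n)=x_i$ ($1\le i\le n$); (C2) $q_n(\mathsf e_j,x_1,\dots,x_n)=\mathsf e_j$ ($j>n$); (C3) $q_n(x,\mathsf e_1,\dots,\mathsf e_n)=x$; (C4) $q_k(x,y_1,\dots,y_k)=q_n(x,y_1,\dots,y_k,\mathsf e_{k+1},\dots,\mathsf e_n)$ ($n>k$); (C5) $q_n(q_n(x,\mathbf y),\mathbf z)=q_n(x,q_n(y_1,\mathbf z),\dots,q_n(y_n,\mathbf z))$; (C6) $q_n(\sigma(x_1,\dots,x_k),\mathbf y)=\sigma(q_n(x_1,\mathbf y),\dots,q_n(x_k,\mathbf y))$ for $\sigma\in\tau$ of arity $k$. An element $a$ is independent of $\mathsf e_n$ if $q_n(a,\mathsf e_1,\dots,\mathsf e_{n-1},\mathsf e_{n+1})=a$; $a$ has finite dimension if it is dependent on only finitely many $\mathsf e_n$. $\mathsf{FiCA}_\tau$ is the class of clone $\tau$-algebras all of whose elements have finite dimension. For a $\tau$-algebra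 $\mathbf A$, the full functional clone $\tau$-algebra with value domain $\mathbf A$ has universe all functions $A^\omega\to A$ and operations $\mathsf e_i(s)=s_i$, $q_n(\varphi,\psi_1,\dots,\psi_n)(s)=\varphi(s[\psi_1(s),\dots,\psi_n(s)])$ (where $s[b_1,\dots,b_n]$ replaces the first $n$ entries of $s$ by the $b_i$), $\sigma(\psi_1,\dots,\psi_n)(s)=\sigma^{\mathbf A}(\psi_1(s),\dots,\psi_n(s))$. The top extension of a finitary $f:A^n\to A$ ($n\ge0$) is $f^\top(s)=f(s_1,\dots,s_n)$. $\mathsf{BLK}_\tau$ is the class of subalgebras of full functional clone $\tau$-algebras (over any $\tau$-algebra $\mathbf A$) whose elements are all top extensions of finitary operations on $A$. $\mathbb I$ denotes closure under isomorphic copies. *)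

From mathcomp Require Import all_boot.
Set Implicit Arguments. Unset Strict Implicit. Unset Printing Implicit Defensive.

(* Conventions: an algebraic type tau is a type of symbols [sig] with an
   arity map [ar].  Indices are 0-based: [e i] stands for the paper's
   e_{i+1}, and a sequence s : nat -> A stands for (s_1, s_2, ...) with
   s i = s_{i+1}. *)

Section CloneAlgebras.
Variables (sig : Type) (ar : sig -> nat).

Record cloneOps (C : Type) := CloneOps {
  op : forall s : sig, ('I_(ar s) -> C) -> C;
  qq : forall n : nat, C -> ('I_n -> C) -> C;
  ee : nat -> C
}.
Arguments op {C} c s _.
Arguments qq {C} c n _ _.
Arguments ee {C} c i.

Definition pad_e (C : Type) (e : nat -> C) (k n : nat) (y : 'I_k -> C)
  : 'I_n -> C :=
  fun i => match (insub (val i) : option 'I_k) with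
           | Some j => y j
           | None => e (val i)
           end.

Definition is_clone_alg (C : Type) (O : cloneOps C) : Prop :=
  (forall n (i : 'I_n) (y : 'I_n -> C), qq O n (ee O i) y = y i) /\
  (forall n j (y : 'I_n -> C), n <= j -> qq O n (ee O j) y = ee O j) /\
  (forall n x, qq O n x (fun i : 'I_n => ee O i) = x) /\
  (forall k n x (y : 'I_k -> C), k < n ->
                 qq O k x y = qq O n x (@pad_e C (ee O) k n y)) /\
  (forall n x (y z : 'I_n -> C),
                 qq O n (qq O n x y) z = qq O n x (fun i => qq O n (y i) z)) /\
  (forall s (xs : 'I_(ar s) -> C) n (y : 'I_n -> C),
                 qq O n (op O s xs) y = op O s (fun j => qq O n (xs j) y)).

(* a is independent of e_{m+1}:
   q_{m+1}(a, e_1, ..., e_m, e_{m+2}) = a *)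
Definition independent (C : Type) (O : cloneOps C) (a : C) (m : nat) : Prop :=
  qq O (m.+1) a (fun i : 'I_m.+1 => if val i < m then ee O i else ee O (m.+1))
  = a.

Definition finite_dimensional_elt (C : Type) (O : cloneOps C) (a : C) : Prop :=
  exists N, forall m, N <= m -> independent O a m.

Definition FiCA (C : Type) (O : cloneOps C) : Prop :=
  is_clone_alg O /\ forall a : C, finite_dimensional_elt O a.

Definition upd (A : Type) (n : nat) (s : nat -> A) (b : 'I_n -> A) : nat -> A :=
  fun i => match (insub i : option 'I_n) with
           | Some j => b j
           | None => s i
           end.

Definition full_fun_ops (A : Type) (opA : forall s : sig, ('I_(ar s) -> A) -> A)
  : cloneOps ((nat -> A) -> A) :=
  @CloneOps ((nat -> A) -> A)
    (fun s psi => fun t => opA s (fun j => psi j t))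
    (fun n phi psi => fun t => phi (upd t (fun i => psi i t)))
    (fun i => fun t => t i).

Definition top_ext (A : Type) (n : nat) (f : ('I_n -> A) -> A) : (nat -> A) -> A :=
  fun t => f (fun i : 'I_n => t (val i)).

Definition is_subalg (A : Type) (opA : forall s : sig, ('I_(ar s) -> A) -> A)
  (S : ((nat -> A) -> A) -> Prop) : Prop :=
  let F := full_fun_ops opA in
  (forall s (xs : 'I_(ar s) -> (nat -> A) -> A),
      (forall j, S (xs j)) -> S (op F s xs)) /\
  (forall n phi (psi : 'I_n -> (nat -> A) -> A),
      S phi -> (forall i, S (psi i)) -> S (qq F n phi psi)) /\
  (forall i, S (ee F i)).

Definition is_block (A : Type) (opA : forall s : sig, ('I_(ar s) -> A) -> A)
  (S : ((nat -> A) -> A) -> Prop) : Prop :=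
  is_subalg opA S /\
  forall phi, S phi -> exists n (f : ('I_n -> A) -> A), phi = top_ext f.

Definition iso_onto (C : Type) (O : cloneOps C) (A : Type)
  (opA : forall s : sig, ('I_(ar s) -> A) -> A)
  (S : ((nat -> A) -> A) -> Prop) (h : C -> (nat -> A) -> A) : Prop :=
  let F := full_fun_ops opA in
  injective h /\
  (forall phi, S phi <-> exists c, h c = phi) /\
  (forall s (xs : 'I_(ar s) -> C), h (op O s xs) = op F s (fun j => h (xs j))) /\
  (forall n x (y : 'I_n -> C), h (qq O n x y) = qq F n (h x) (fun i => h (y i))) /\
  (forall i, h (ee O i) = ee F i).

Definition iso_to_block (C : Type) (O : cloneOps C) : Prop :=
  exists (A : Type) (opA : forall s : sig, ('I_(ar s) -> A) -> A)
         (S : ((nat -> A) -> A) -> Prop) (h : C -> (nat -> A) -> A),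
    is_block opA S /\ iso_onto O opA S h.

End CloneAlgebras.

(* A clone algebra element a independent of all e_m with m >= N acts on a
   sequence t only through its first N entries: q_m(a, t_1..t_m) does not
   depend on m >= N.  Hence a |-> (t |-> q_N(a, t_1..t_N)) maps a
   finite-dimensional clone algebra, with value domain its own carrier,
   onto a block algebra; axioms (C3)-(C6) make it an injective homomorphism.
   Conversely, a top extension of arity n is independent of every e_m with
   m >= n, and an injective homomorphism reflects independence. *)

From Stdlib Require Import FunctionalExtensionality ClassicalEpsilon.
From mathcomp Require Import all_boot.
Set Implicit Arguments. Unset Strict Implicit. Unset Printing Implicit Defensive.

Section Homomorphisms.
Variables (sig : Type) (ar : sig -> nat).

Definition clone_hom (C D : Type) (O : cloneOps ar C) (P : cloneOps ar D)
    (h : C -> D) : Prop :=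
  (forall s (xs : 'I_(ar s) -> C),
     h (op O (s := s) xs) = op P (s := s) (fun j => h (xs j))) /\
  (forall n x (y : 'I_n -> C), h (qq O x y) = qq P (h x) (fun i => h (y i))) /\
  (forall i, h (ee O i) = ee P i).

Lemma hom_image_subalg (C A : Type) (O : cloneOps ar C)
    (opA : forall s : sig, ('I_(ar s) -> A) -> A) (h : C -> (nat -> A) -> A) :
  clone_hom O (full_fun_ops opA) h -> is_subalg opA (fun phi => exists c, h c = phi).
Proof.
move=> [h_op [h_qq h_ee]]; split; [|split].
- move=> s xs /choice [cs Ecs]; exists (op O (s := s) cs).
  by rewrite h_op; congr (op _ (s := s)); apply: functional_extensionality.
- move=> n phi psi [c <-] /choice [cs Ecs]; exists (qq O c cs).
  by rewrite h_qq; congr (qq _ _); apply: functional_extensionality.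
- by move=> i; exists (ee O i).
Qed.

Lemma hom_reflects_independent (C D : Type) (O : cloneOps ar C) (P : cloneOps ar D)
    (h : C -> D) a m :
  injective h -> clone_hom O P h -> independent P (h a) m -> independent O a m.
Proof.
move=> h_inj [_ [h_qq h_ee]] indep; apply: h_inj; rewrite h_qq -[RHS]indep.
by congr (qq _ _); apply: functional_extensionality => i; case: ifP.
Qed.

Lemma top_ext_independent (A : Type) (opA : forall s : sig, ('I_(ar s) -> A) -> A)
    n (f : ('I_n -> A) -> A) m :
  n <= m -> independent (full_fun_ops opA) (top_ext f) m.
Proof.
move=> le_nm; apply: functional_extensionality => t; rewrite /= /top_ext /upd.
congr f; apply: functional_extensionality => i.
have lt_im : val i < m by apply: leq_trans (ltn_ord i) le_nm.
by rewrite insubT ?(ltn_trans lt_im) //= lt_im.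
Qed.

End Homomorphisms.

Section FiniteDimensional.
Variables (sig : Type) (ar : sig -> nat) (C : Type) (O : cloneOps ar C).
Hypothesis cloneO : is_clone_alg O.

Definition prefix (t : nat -> C) m : 'I_m -> C := fun i => t (val i).
Arguments prefix t m : clear implicits.

Lemma independent_qq a m (u : 'I_m.+1 -> C) :
  independent O a m ->
  qq O a u = qq O a (fun i => if val i < m then u i else ee O m.+1).
Proof.
have [C1 [C2 [_ [_ [C5 _]]]]] := cloneO.
move=> indep; rewrite -[in LHS]indep C5; congr (qq _ _).
by apply: functional_extensionality => i; case: ifP => _; [exact: C1 | exact: C2].
Qed.

Lemma qq_prefixS a m t :
  independent O a m -> qq O a (prefix t m) = qq O a (prefix t m.+1).
Proof.
have [_ [_ [_ [C4 _]]]] := cloneO.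
move=> indep; rewrite (C4 m m.+1) // (independent_qq _ indep).
rewrite [RHS](independent_qq _ indep).
congr (qq _ _); apply: functional_extensionality => i.
by case: ifP => // lt_im; rewrite /pad_e insubT.
Qed.

Lemma qq_prefix_stable a N t m :
  (forall k, N <= k -> independent O a k) -> N <= m ->
  qq O a (prefix t m) = qq O a (prefix t N).
Proof.
move=> indep; elim: m => [|m IHm]; first by rewrite leqn0 => /eqP ->.
rewrite leq_eqVlt ltnS => /orP [/eqP -> // | le_Nm].
by rewrite -qq_prefixS; [exact: IHm | exact: indep].
Qed.

Hypothesis fin_dim : forall a : C, finite_dimensional_elt O a.

Definition dim (a : C) : nat :=
  proj1_sig (constructive_indefinite_description _ (fin_dim a)).

Lemma dim_independent a m : dim a <= m -> independent O a m.
Proof. exact: (proj2_sig (constructive_indefinite_description _ (fin_dim a))). Qed.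

Definition top_rep (a : C) : (nat -> C) -> C :=
  top_ext (fun y : 'I_(dim a) -> C => qq O a y).

Lemma top_repE a m t : dim a <= m -> top_rep a t = qq O a (prefix t m).
Proof. by move=> le_dm; rewrite (qq_prefix_stable _ (@dim_independent a)). Qed.

Lemma top_rep_inj : injective top_rep.
Proof.
have [_ [_ [C3 _]]] := cloneO.
move=> a b /(congr1 (fun f => f (ee O))); set M := maxn (dim a) (dim b).
rewrite (top_repE _ (leq_maxl _ _ : _ <= M)).
by rewrite (top_repE _ (leq_maxr _ _ : _ <= M)) !C3.
Qed.

Lemma top_rep_op s (xs : 'I_(ar s) -> C) :
  top_rep (op O (s := s) xs) =
  op (full_fun_ops (op O)) (s := s) (fun j => top_rep (xs j)).
Proof.
have [_ [_ [_ [_ [_ C6]]]]] := cloneO.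
apply: functional_extensionality => t /=.
pose M := maxn (dim (op O (s := s) xs)) (\max_(j < ar s) dim (xs j)).
rewrite (top_repE _ (leq_maxl _ _ : _ <= M)) C6; congr (op O (s := s)).
apply: functional_extensionality => j; rewrite (top_repE (m := M)) //.
exact: leq_trans (leq_bigmax j) (leq_maxr _ _).
Qed.

Lemma top_rep_qq n x (y : 'I_n -> C) :
  top_rep (qq O x y) =
  qq (full_fun_ops (op O)) (top_rep x) (fun i => top_rep (y i)).
Proof.
have [C1 [_ [_ [C4 [C5 _]]]]] := cloneO.
apply: functional_extensionality => t /=.
pose M := maxn n.+1
  (maxn (dim (qq O x y)) (maxn (dim x) (\max_(i < n) dim (y i)))).
have lt_nM : n < M := leq_maxl _ _.
have le_qM : dim (qq O x y) <= M by rewrite !leq_max leqnn !orbT.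
have le_xM : dim x <= M by rewrite !leq_max leqnn !orbT.
have le_yM i : dim (y i) <= M by rewrite !leq_max leq_bigmax !orbT.
rewrite (top_repE _ le_qM) (C4 n M) // C5 (top_repE _ le_xM).
congr (qq O x); apply: functional_extensionality => i.
rewrite /pad_e /prefix /upd; case: (insub (val i)) => [j|]; last exact: C1.
by rewrite (top_repE _ (le_yM j)).
Qed.

Lemma top_rep_ee i : top_rep (ee O i) = ee (full_fun_ops (op O)) i.
Proof.
have [C1 _] := cloneO.
apply: functional_extensionality => t /=.
set M := maxn (dim (ee O i)) i.+1.
have lt_iM : i < M by rewrite leq_max ltnSn orbT.
by rewrite (top_repE _ (leq_maxl _ _ : _ <= M)) (C1 _ (Ordinal lt_iM)).
Qed.

Lemma top_rep_hom : clone_hom O (full_fun_ops (op O)) top_rep.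
Proof.
by split; [exact: top_rep_op | split; [exact: top_rep_qq | exact: top_rep_ee]].
Qed.

Lemma fin_dim_iso_to_block : iso_to_block O.
Proof.
exists C, (op O), (fun phi => exists c, top_rep c = phi), top_rep.
split; first split.
- exact: hom_image_subalg top_rep_hom.
- by move=> phi [a <-]; exists (dim a), (fun y => qq O a y).
- by split; [exact: top_rep_inj | split; [by [] | exact: top_rep_hom]].
Qed.

End FiniteDimensional.

Lemma iso_to_block_fin_dim (sig : Type) (ar : sig -> nat) (C : Type)
    (O : cloneOps ar C) (a : C) :
  iso_to_block O -> finite_dimensional_elt O a.
Proof.
move=> [A [opA [S [h [[_ S_top] [h_inj [S_img h_hom]]]]]]].
have [n [f Ef]] := S_top (h a) ((S_img _).2 (ex_intro _ a erefl)).
exists n => m le_nm; apply: (hom_reflects_independent h_inj h_hom).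
by rewrite Ef; exact: top_ext_independent.
Qed.

Theorem theorem7p7 (sig : Type) (ar : sig -> nat) (C : Type)
  (O : cloneOps ar C) :
  is_clone_alg O -> (FiCA O <-> iso_to_block O).
Proof.
move=> cloneO; split.
- by move=> [_ fin_dim]; exact: fin_dim_iso_to_block.
- by move=> isoO; split=> // a; exact: iso_to_block_fin_dim.
Qed.
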